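(* Let $A$ be a Banach algebra and $n\ge 2$ such that $JMul_{n,l}(A,A^{*})$ is algebraically reflexive, and let $X$ be a right Banach $A$-module with $\{x\in X: x^{\perp}=A\}=\{0\}$. Then every approximately local left $n$-Jordan multiplier from $A$ into $X$ is a left $n$-Jordan multiplier.
   Context: $A^*$ is the dual of $A$, a right Banach $A$-module via $(f\cdot a)(b)=f(ab)$. A bounded linear $J:A\to Y$ is a left $n$-Jordan multiplier if $J(a^n)=J(a^{n-1})\cdot a$ for all $a\in A$; $JMul_{n,l}(A,Y)$ is the set of these. $T:A\to X$ bounded linear is an approximately local left $n$-Jordan multiplier if for each $a\in A$ there is a sequence $(J_{a,m})_m$ in $JMul_{n,l}(A,X)$ with $T(a)=\lim_m J_{a,m}(a)$. For $S\subseteq B(A,Y)$, $\mathrm{ref}(S)=\{T\in B(A,Y): T(x)\in\overline{\{s(x):s\in S\}}\ \forall x\in A\}$; $S$ is algebraically reflexive if $\mathrm{ref}(S)\subseteq S$. For $x\in X$, $x^\perp=\{a\in A: x\cdot a=0\}$. *)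

From Stdlib Require Import Reals.
Open Scope R_scope.

Record Cx := mkCx { Re : R; Im : R }.
Definition C0 : Cx := mkCx 0 0.
Definition C1 : Cx := mkCx 1 0.
Definition Cadd (z w : Cx) : Cx := mkCx (Re z + Re w) (Im z + Im w).
Definition Copp (z : Cx) : Cx := mkCx (- Re z) (- Im z).
Definition Cmul (z w : Cx) : Cx :=
  mkCx (Re z * Re w - Im z * Im w) (Re z * Im w + Im z * Re w).
Definition Cabs (z : Cx) : R := sqrt (Re z * Re z + Im z * Im z).

Record BanachSpace := {
  bs_car :> Type;
  bs_zero : bs_car;
  bs_add : bs_car -> bs_car -> bs_car;
  bs_opp : bs_car -> bs_car;
  bs_scal : Cx -> bs_car -> bs_car;
  bs_norm : bs_car -> R;
  bs_addA : forall x y z, bs_add x (bs_add y z) = bs_add (bs_add x y) z;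
  bs_addC : forall x y, bs_add x y = bs_add y x;
  bs_add0 : forall x, bs_add x bs_zero = x;
  bs_addN : forall x, bs_add x (bs_opp x) = bs_zero;
  bs_scalDr : forall c x y, bs_scal c (bs_add x y) = bs_add (bs_scal c x) (bs_scal c y);
  bs_scalDl : forall c d x, bs_scal (Cadd c d) x = bs_add (bs_scal c x) (bs_scal d x);
  bs_scalA : forall c d x, bs_scal (Cmul c d) x = bs_scal c (bs_scal d x);
  bs_scal1 : forall x, bs_scal C1 x = x;
  bs_norm_eq0 : forall x, bs_norm x = 0 -> x = bs_zero;
  bs_normZ : forall c x, bs_norm (bs_scal c x) = Cabs c * bs_norm x;
  bs_normD : forall x y, bs_norm (bs_add x y) <= bs_norm x + bs_norm y;
  bs_complete : forall u : nat -> bs_car,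
    (forall eps, 0 < eps -> exists N, forall m k, (N <= m)%nat -> (N <= k)%nat ->
       bs_norm (bs_add (u m) (bs_opp (u k))) < eps) ->
    exists l, forall eps, 0 < eps -> exists N, forall m, (N <= m)%nat ->
       bs_norm (bs_add (u m) (bs_opp l)) < eps
}.
Arguments bs_zero {_}. Arguments bs_add {_}. Arguments bs_opp {_}.
Arguments bs_scal {_}. Arguments bs_norm {_}.

Definition bs_sub {E : BanachSpace} (x y : E) : E := bs_add x (bs_opp y).

Record BanachAlgebra := {
  ba_sp :> BanachSpace;
  ba_mul : ba_sp -> ba_sp -> ba_sp;
  ba_mulA : forall a b c, ba_mul a (ba_mul b c) = ba_mul (ba_mul a b) c;
  ba_mulDl : forall a b c, ba_mul (bs_add a b) c = bs_add (ba_mul a c) (ba_mul b c);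
  ba_mulDr : forall a b c, ba_mul a (bs_add b c) = bs_add (ba_mul a b) (ba_mul a c);
  ba_scal_mull : forall t a b, ba_mul (bs_scal t a) b = bs_scal t (ba_mul a b);
  ba_scal_mulr : forall t a b, ba_mul a (bs_scal t b) = bs_scal t (ba_mul a b);
  ba_normM : forall a b, bs_norm (ba_mul a b) <= bs_norm a * bs_norm b
}.
Arguments ba_mul {_}.

Record RightBanachModule (A : BanachAlgebra) := {
  rm_sp :> BanachSpace;
  rm_act : rm_sp -> A -> rm_sp;
  rm_actDl : forall x y a, rm_act (bs_add x y) a = bs_add (rm_act x a) (rm_act y a);
  rm_actDr : forall x a b, rm_act x (bs_add a b) = bs_add (rm_act x a) (rm_act x b);
  rm_act_scall : forall t x a, rm_act (bs_scal t x) a = bs_scal t (rm_act x a);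
  rm_act_scalr : forall t x a, rm_act x (bs_scal t a) = bs_scal t (rm_act x a);
  rm_actA : forall x a b, rm_act (rm_act x a) b = rm_act x (ba_mul a b);
  rm_normM : forall x a, bs_norm (rm_act x a) <= bs_norm x * bs_norm a
}.
Arguments rm_act {_ _}.

(** a^(k+1) : powers with positive exponent (A need not be unital) *)
Fixpoint powS {A : BanachAlgebra} (a : A) (k : nat) : A :=
  match k with O => a | S k' => ba_mul (powS a k') a end.
(* apow a n = a^n for n >= 1 *)
Definition apow {A : BanachAlgebra} (a : A) (n : nat) : A := powS a (n - 1).

Definition bounded_linear {E F : BanachSpace} (T : E -> F) : Prop :=
  (forall x y, T (bs_add x y) = bs_add (T x) (T y)) /\
  (forall c x, T (bs_scal c x) = bs_scal c (T x)) /\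
  (exists M, forall x, bs_norm (T x) <= M * bs_norm x).

Definition JMul_l {A : BanachAlgebra} (X : RightBanachModule A) (n : nat)
  (J : A -> X) : Prop :=
  bounded_linear J /\
  forall a : A, J (apow a n) = rm_act (J (apow a (n - 1))) a.

Definition approx_local_JMul_l {A : BanachAlgebra} (X : RightBanachModule A)
  (n : nat) (T : A -> X) : Prop :=
  bounded_linear T /\
  forall a : A, exists J : nat -> A -> X,
    (forall m, JMul_l X n (J m)) /\
    (forall eps, 0 < eps -> exists N, forall m, (N <= m)%nat ->
       bs_norm (bs_sub (J m a) (T a)) < eps).

(** An element of A^* is a bounded linear functional f : A -> Cx; the module
    action is (f . a)(b) = f(ab); the norm is the operator norm, so
    ||f|| <= r iff |f b| <= r ||b|| for all b.  A map J : A -> A^* is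
    represented as J : A -> A -> Cx (J a = the functional J(a)); equality in
    A^* is pointwise equality of functionals. *)
Definition dual_elt {A : BanachAlgebra} (f : A -> Cx) : Prop :=
  (forall x y, f (bs_add x y) = Cadd (f x) (f y)) /\
  (forall c x, f (bs_scal c x) = Cmul c (f x)) /\
  (exists M, forall x, Cabs (f x) <= M * bs_norm x).

Definition dual_dist_le {A : BanachAlgebra} (f g : A -> Cx) (r : R) : Prop :=
  forall b : A, Cabs (Cadd (f b) (Copp (g b))) <= r * bs_norm b.

Definition bounded_linear_dual {A : BanachAlgebra} (J : A -> A -> Cx) : Prop :=
  (forall a, dual_elt (J a)) /\
  (forall a a' b, J (bs_add a a') b = Cadd (J a b) (J a' b)) /\
  (forall c a b, J (bs_scal c a) b = Cmul c (J a b)) /\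
  (exists M, forall a, dual_dist_le (J a) (fun _ => C0) (M * bs_norm a)).

Definition JMul_l_dual (A : BanachAlgebra) (n : nat) (J : A -> A -> Cx) : Prop :=
  bounded_linear_dual J /\
  forall a b : A, J (apow a n) b = J (apow a (n - 1)) (ba_mul a b).

(* ref(JMul_{n,l}(A, A^* )) : T(x) lies in the norm closure of {s(x) : s in S} *)
Definition ref_JMul_l_dual (A : BanachAlgebra) (n : nat) (T : A -> A -> Cx) : Prop :=
  bounded_linear_dual T /\
  forall x : A, forall eps, 0 < eps ->
    exists s, JMul_l_dual A n s /\ dual_dist_le (T x) (s x) eps.

Definition JMul_l_dual_alg_reflexive (A : BanachAlgebra) (n : nat) : Prop :=
  forall T, ref_JMul_l_dual A n T -> JMul_l_dual A n T.

From Stdlib Require Import Reals Lra Classical ClassicalEpsilon.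
From mathcomp Require boolp classical_sets.
Open Scope R_scope.

(* Let y := T(a^n) - T(a^(n-1)) . a.  Since X is faithful it suffices that
   y . b = 0 for every b, and by Hahn-Banach that phi (y . b) = 0 for every
   bounded functional phi on X.  Composing with phi turns maps J : A -> X into
   maps A -> A^*, a |-> (b |-> phi (J a . b)); this sends left n-Jordan
   multipliers into JMul_{n,l}(A, A^* ) and, uniformly in b, approximations of T
   into approximations of its image, so the image of T lies in the reflexive
   closure of JMul_{n,l}(A, A^* ).  By algebraic reflexivity it is itself a left
   n-Jordan multiplier, which is exactly phi (y . b) = 0.

   Hahn-Banach is proved directly for the Banach spaces at hand: by Zorn's
   lemma some sublinear functional below a given one is minimal, and a minimal
   sublinear functional is linear. *)

Lemma Cx_eq (z w : Cx) : Re z = Re w -> Im z = Im w -> z = w.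
Proof. destruct z, w; simpl; intros; subst; reflexivity. Qed.

Lemma Cabs_real (t : R) : Cabs (mkCx t 0) = Rabs t.
Proof.
  unfold Cabs; simpl. replace (t * t + 0 * 0) with (Rsqr t) by (unfold Rsqr; ring).
  apply sqrt_Rsqr_abs.
Qed.

Lemma Cabs_le_Rabs (z : Cx) : Cabs z <= Rabs (Re z) + Rabs (Im z).
Proof.
  pose proof (Rabs_pos (Re z)); pose proof (Rabs_pos (Im z)).
  unfold Cabs. rewrite <- (sqrt_Rsqr (Rabs (Re z) + Rabs (Im z))) by lra.
  apply sqrt_le_1_alt.
  pose proof (Rsqr_abs (Re z)); pose proof (Rsqr_abs (Im z)). unfold Rsqr in *. nra.
Qed.

Section RealScalars.
Variable E : BanachSpace.

Definition rscal (t : R) (x : E) : E := bs_scal (mkCx t 0) x.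

Lemma bs_add0l (x : E) : bs_add bs_zero x = x.
Proof. rewrite bs_addC; apply bs_add0. Qed.

Lemma bs_addI (x y z : E) : bs_add x y = bs_add x z -> y = z.
Proof.
  intro H.
  assert (Hx : bs_add (bs_opp x) (bs_add x y) = bs_add (bs_opp x) (bs_add x z))
    by (rewrite H; reflexivity).
  rewrite !bs_addA, (bs_addC _ (bs_opp x) x), bs_addN, !bs_add0l in Hx. exact Hx.
Qed.

Lemma bs_opp_unique (x y : E) : bs_add x y = bs_zero -> y = bs_opp x.
Proof. intro H; apply (bs_addI x); rewrite H, bs_addN; reflexivity. Qed.

Lemma rscalDl (s t : R) (x : E) : rscal (s + t) x = bs_add (rscal s x) (rscal t x).
Proof. unfold rscal; rewrite <- bs_scalDl; f_equal; apply Cx_eq; simpl; ring. Qed.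

Lemma rscalDr (t : R) (x y : E) : rscal t (bs_add x y) = bs_add (rscal t x) (rscal t y).
Proof. apply bs_scalDr. Qed.

Lemma rscalA (s t : R) (x : E) : rscal s (rscal t x) = rscal (s * t) x.
Proof. unfold rscal; rewrite <- bs_scalA; f_equal; apply Cx_eq; simpl; ring. Qed.

Lemma rscal1 (x : E) : rscal 1 x = x.
Proof. apply bs_scal1. Qed.

Lemma rscal0 (x : E) : rscal 0 x = bs_zero.
Proof.
  apply (bs_addI (rscal 0 x)). rewrite <- rscalDl, bs_add0, Rplus_0_l. reflexivity.
Qed.

Lemma rscalx0 (t : R) : rscal t bs_zero = bs_zero.
Proof. rewrite <- (rscal0 bs_zero), rscalA, Rmult_0_r. reflexivity. Qed.

Lemma bs_oppE (x : E) : bs_opp x = rscal (-1) x.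
Proof.
  symmetry; apply bs_opp_unique. rewrite <- (rscal1 x) at 1.
  rewrite <- rscalDl, Rplus_opp_r. apply rscal0.
Qed.

Lemma bs_oppD (x y : E) : bs_opp (bs_add x y) = bs_add (bs_opp x) (bs_opp y).
Proof. rewrite !bs_oppE; apply rscalDr. Qed.

Lemma bs_oppK (x : E) : bs_opp (bs_opp x) = x.
Proof. rewrite !bs_oppE, rscalA. replace (-1 * -1) with 1 by ring. apply rscal1. Qed.

Lemma bs_sub_eq0 (x y : E) : bs_sub x y = bs_zero -> x = y.
Proof.
  unfold bs_sub; intro H. apply bs_opp_unique in H.
  rewrite <- (bs_oppK x), <- H, bs_oppK. reflexivity.
Qed.

Lemma bs_add_perm (x y u v : E) :
  bs_add (bs_add x y) (bs_add u v) = bs_add (bs_add x u) (bs_add y v).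
Proof.
  rewrite !bs_addA. f_equal. rewrite <- !bs_addA. f_equal. apply bs_addC.
Qed.

Lemma bs_norm_rscal (t : R) (x : E) : bs_norm (rscal t x) = Rabs t * bs_norm x.
Proof. unfold rscal; rewrite bs_normZ, Cabs_real; reflexivity. Qed.

Lemma bs_norm0 : bs_norm (@bs_zero E) = 0.
Proof. rewrite <- (rscal0 bs_zero), bs_norm_rscal, Rabs_R0; ring. Qed.

Lemma bs_normN (x : E) : bs_norm (bs_opp x) = bs_norm x.
Proof. rewrite bs_oppE, bs_norm_rscal, Rabs_left by lra. ring. Qed.

Lemma bs_norm_ge0 (x : E) : 0 <= bs_norm x.
Proof.
  pose proof (bs_normD _ x (bs_opp x)) as H.
  rewrite bs_addN, bs_norm0, bs_normN in H. lra.
Qed.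

Lemma bs_norm_subC (x y : E) : bs_norm (bs_sub x y) = bs_norm (bs_sub y x).
Proof. unfold bs_sub; rewrite <- bs_normN, bs_oppD, bs_oppK, bs_addC; reflexivity. Qed.

End RealScalars.

Arguments rscal {E}.

Definition is_glb (P : R -> Prop) (l : R) : Prop :=
  (forall v, P v -> l <= v) /\ (forall m, (forall v, P v -> m <= v) -> m <= l).

Definition inf (P : R -> Prop) : R := epsilon (inhabits 0) (is_glb P).

Lemma inf_spec (P : R -> Prop) :
  (exists v, P v) -> (exists m, forall v, P v -> m <= v) -> is_glb P (inf P).
Proof.
  intros [v Hv] [m Hm]. unfold inf. apply epsilon_spec.
  destruct (completeness (fun w => P (- w))) as [L [HL1 HL2]].
  - exists (- m). intros w Hw. apply Hm in Hw. lra.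
  - exists (- v). rewrite Ropp_involutive; exact Hv.
  - exists (- L). split.
    + intros u Hu. assert (- u <= L) by (apply HL1; rewrite Ropp_involutive; exact Hu). lra.
    + intros m' Hm'. assert (L <= - m') by (apply HL2; intros w Hw; apply Hm' in Hw; lra). lra.
Qed.

Lemma zorn_preorder (T : Type) (t0 : T) (P : T -> T -> Prop) :
  (forall t, P t t) -> (forall r s t, P r s -> P s t -> P r t) ->
  (forall C : T -> Prop, (forall s t, C s -> C t -> P s t \/ P t s) ->
      exists t, forall s, C s -> P s t) ->
  exists t, forall s, P t s -> P s t.
Proof.
  intros Hrefl Htrans Hchain.
  destruct (@classical_sets.ZL_preorder T t0 (fun s t => boolp.asbool (P s t)))
    as [t Ht].
  - intro t; apply boolp.asboolT, Hrefl.
  - intros r s t Hrs Hst; apply boolp.asboolT.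
    apply boolp.asboolW in Hrs, Hst. eauto.
  - intros C HC. destruct (Hchain C) as [t Ht].
    + intros s t Hs Ht. destruct (HC s t Hs Ht) as [H | H];
        apply boolp.asboolW in H; auto.
    + exists t; intros s Hs; apply boolp.asboolT; auto.
  - exists t; intros s Hs. apply boolp.asboolW, Ht, boolp.asboolT, Hs.
Qed.

Section Sublinear.
Variable E : BanachSpace.

Definition sublinear (q : E -> R) : Prop :=
  (forall x y, q (bs_add x y) <= q x + q y) /\
  (forall t x, 0 < t -> q (rscal t x) = t * q x).

Lemma sublinear0 q : sublinear q -> q bs_zero = 0.
Proof.
  intros [_ Hhom]. pose proof (Hhom 2 bs_zero) as H. rewrite rscalx0 in H. lra.
Qed.

Lemma sublinear_rscal q t x : sublinear q -> 0 <= t -> q (rscal t x) = t * q x.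
Proof.
  intros Hq Ht. destruct (Req_dec t 0) as [-> | Ht0].
  - rewrite rscal0, sublinear0 by exact Hq. ring.
  - apply (proj2 Hq). lra.
Qed.

Lemma sublinear_oppN_le q x : sublinear q -> - q (bs_opp x) <= q x.
Proof.
  intro Hq. pose proof (proj1 Hq x (bs_opp x)) as H.
  rewrite bs_addN, sublinear0 in H by exact Hq. lra.
Qed.

(* Homogeneity follows from the inequality [q (t x) <= t q x] applied to [1/t]. *)
Lemma sublinear_of_le q :
  (forall x y, q (bs_add x y) <= q x + q y) ->
  (forall t x, 0 < t -> q (rscal t x) <= t * q x) -> sublinear q.
Proof.
  intros Hadd Hhom. split; [exact Hadd|]. intros t x Ht.
  apply Rle_antisym; [auto|].
  pose proof (Hhom (/ t) (rscal t x) (Rinv_0_lt_compat t Ht)) as H.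
  rewrite rscalA, Rinv_l, rscal1 in H by lra.
  apply (Rmult_le_compat_l t) in H; [|lra].
  rewrite <- Rmult_assoc, Rinv_r, Rmult_1_l in H by lra. exact H.
Qed.

Lemma sublinear_glb (F : E -> R -> Prop) (m : E -> R) :
  (forall x, is_glb (F x) (m x)) ->
  (forall x y v w, F x v -> F y w -> exists u, F (bs_add x y) u /\ u <= v + w) ->
  (forall t x v, 0 < t -> F x v -> exists u, F (rscal t x) u /\ u <= t * v) ->
  sublinear m.
Proof.
  intros Hglb Hadd Hhom. apply sublinear_of_le.
  - intros x y. enough (m (bs_add x y) - m y <= m x) by lra.
    apply (proj2 (Hglb x)). intros v Hv.
    enough (m (bs_add x y) - v <= m y) by lra.
    apply (proj2 (Hglb y)). intros w Hw.
    destruct (Hadd x y v w Hv Hw) as [u [Hu Huvw]].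
    pose proof (proj1 (Hglb _) u Hu). lra.
  - intros t x Ht. enough (H : / t * m (rscal t x) <= m x).
    { apply (Rmult_le_compat_l t) in H; [|lra].
      rewrite <- Rmult_assoc, Rinv_r, Rmult_1_l in H by lra. exact H. }
    apply (proj2 (Hglb x)). intros v Hv.
    destruct (Hhom t x v Ht Hv) as [u [Hu Hutv]].
    pose proof (proj1 (Hglb _) u Hu).
    apply (Rmult_le_reg_l t); [lra|].
    rewrite <- Rmult_assoc, Rinv_r, Rmult_1_l by lra. lra.
Qed.

Definition shift_set (q : E -> R) (z x : E) (v : R) : Prop :=
  exists t, 0 <= t /\ v = q (bs_add x (rscal t z)) - t * q z.

Definition shift (q : E -> R) (z : E) (x : E) : R := inf (shift_set q z x).

Lemma shift_glb q z x : sublinear q -> is_glb (shift_set q z x) (shift q z x).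
Proof.
  intro Hq. apply inf_spec.
  - exists (q x), 0. split; [lra|]. rewrite rscal0, bs_add0. ring.
  - exists (- q (bs_opp x)). intros v [t [Ht ->]].
    pose proof (proj1 Hq (bs_add x (rscal t z)) (bs_opp x)) as H.
    replace (bs_add (bs_add x (rscal t z)) (bs_opp x)) with (rscal t z) in H
      by (rewrite (bs_addC _ x (rscal t z)), <- bs_addA, bs_addN, bs_add0; reflexivity).
    rewrite sublinear_rscal in H by assumption. lra.
Qed.

Lemma shift_le q z x : sublinear q -> shift q z x <= q x.
Proof.
  intro Hq. apply (proj1 (shift_glb q z x Hq)). exists 0. split; [lra|].
  rewrite rscal0, bs_add0. ring.
Qed.

Lemma shift_opp_le q z : sublinear q -> shift q z (bs_opp z) <= - q z.
Proof.
  intro Hq. apply (proj1 (shift_glb q z (bs_opp z) Hq)). exists 1. split; [lra|].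
  rewrite rscal1, bs_addC, bs_addN, sublinear0 by exact Hq. ring.
Qed.

Lemma shift_sublinear q z : sublinear q -> sublinear (shift q z).
Proof.
  intro Hq. apply (sublinear_glb (shift_set q z)).
  - intro x; apply shift_glb, Hq.
  - intros x y v w [s [Hs ->]] [t [Ht ->]].
    exists (q (bs_add (bs_add x y) (rscal (s + t) z)) - (s + t) * q z). split.
    + exists (s + t). split; [lra | reflexivity].
    + rewrite rscalDl, bs_add_perm.
      pose proof (proj1 Hq (bs_add x (rscal s z)) (bs_add y (rscal t z))). lra.
  - intros l x v Hl [t [Ht ->]].
    exists (q (bs_add (rscal l x) (rscal (l * t) z)) - (l * t) * q z). split.
    + exists (l * t). split; [nra | reflexivity].
    + rewrite <- rscalA, <- rscalDr, (proj2 Hq) by exact Hl. lra.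
Qed.

Lemma chain_inf_sublinear (G : (E -> R) -> Prop) (m : E -> R) :
  (forall f, G f -> sublinear f) ->
  (forall f g, G f -> G g -> (forall x, f x <= g x) \/ (forall x, g x <= f x)) ->
  (forall x, is_glb (fun v => exists f, G f /\ v = f x) (m x)) -> sublinear m.
Proof.
  intros Hsub Htot Hglb. apply (sublinear_glb _ m Hglb).
  - intros x y v w [f [Hf ->]] [g [Hg ->]].
    pose proof (proj1 (Hsub f Hf) x y); pose proof (proj1 (Hsub g Hg) x y).
    destruct (Htot f g Hf Hg) as [Hfg | Hgf].
    + exists (f (bs_add x y)). split; [eauto|]. pose proof (Hfg y). lra.
    + exists (g (bs_add x y)). split; [eauto|]. pose proof (Hgf x). lra.
  - intros t x v Ht [f [Hf ->]]. exists (f (rscal t x)). split; [eauto|].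
    rewrite (proj2 (Hsub f Hf)) by exact Ht. lra.
Qed.

(* Minimality forces [q (-z) = - q z], since [shift q z] lies below [q]. *)
Lemma minimal_sublinear_linear q :
  sublinear q ->
  (forall p, sublinear p -> (forall x, p x <= q x) -> forall x, q x <= p x) ->
  (forall x y, q (bs_add x y) = q x + q y) /\ (forall t x, q (rscal t x) = t * q x).
Proof.
  intros Hq Hmin.
  assert (Hopp : forall z, q (bs_opp z) = - q z).
  { intro z. pose proof (Hmin _ (shift_sublinear q z Hq) (fun x => shift_le q z x Hq)
      (bs_opp z)).
    pose proof (shift_opp_le q z Hq). pose proof (sublinear_oppN_le q z Hq). lra. }
  split.
  - intros x y. apply Rle_antisym; [apply (proj1 Hq)|].
    pose proof (proj1 Hq (bs_add x y) (bs_opp y)) as H.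
    rewrite <- bs_addA, bs_addN, bs_add0, Hopp in H. lra.
  - intros t x. destruct (Rle_dec 0 t).
    + apply sublinear_rscal; assumption.
    + replace (rscal t x) with (bs_opp (rscal (- t) x))
        by (rewrite bs_oppE, rscalA; f_equal; ring).
      rewrite Hopp, (proj2 Hq) by lra. ring.
Qed.

End Sublinear.

Section HahnBanach.
Variable E : BanachSpace.

Lemma exists_minimal_sublinear (q0 : E -> R) : sublinear E q0 ->
  exists q, sublinear E q /\ (forall x, q x <= q0 x) /\
    forall p, sublinear E p -> (forall x, p x <= q x) -> forall x, q x <= p x.
Proof.
  intro Hq0.
  set (T := {q : E -> R | sublinear E q /\ forall x, q x <= q0 x}).
  set (below := fun s t : T => forall x, proj1_sig t x <= proj1_sig s x).
  assert (Hq0T : sublinear E q0 /\ forall x, q0 x <= q0 x) by (split; [exact Hq0 | intro; lra]).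
  destruct (zorn_preorder T (exist _ q0 Hq0T) below) as [[q [Hq Hqle]] Hmax].
  - intros t x; lra.
  - intros r s t Hrs Hst x. pose proof (Hrs x); pose proof (Hst x); lra.
  - intros C HC.
    (* [q0] is adjoined to the chain so that the infimum is over a nonempty set. *)
    set (G := fun f => f = q0 \/ exists s, C s /\ f = proj1_sig s).
    assert (HG : forall f, G f -> sublinear E f /\ forall x, f x <= q0 x).
    { intros f [-> | [s [_ ->]]]; [exact Hq0T | exact (proj2_sig s)]. }
    set (F := fun x v => exists f, G f /\ v = f x).
    assert (Hglb : forall x, is_glb (F x) (inf (F x))).
    { intro x. apply inf_spec.
      - exists (q0 x), q0. split; [left |]; reflexivity.
      - exists (- q0 (bs_opp x)). intros v [f [Hf ->]].
        destruct (HG f Hf) as [Hsub Hle].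
        pose proof (sublinear_oppN_le E f x Hsub). pose proof (Hle (bs_opp x)). lra. }
    assert (Hm : sublinear E (fun x => inf (F x)) /\ forall x, inf (F x) <= q0 x).
    { split.
      - apply (chain_inf_sublinear E G); [intros f Hf; apply HG, Hf | | exact Hglb].
        intros f g [-> | [s [Hs ->]]] [-> | [t [Ht ->]]].
        + left; intro; lra.
        + right; apply (proj2_sig t).
        + left; apply (proj2_sig s).
        + destruct (HC s t Hs Ht); [right | left]; assumption.
      - intro x. apply (proj1 (Hglb x)). exists q0. split; [left |]; reflexivity. }
    exists (exist _ (fun x => inf (F x)) Hm : T). intros s Hs x. apply (proj1 (Hglb x)).
    exists (proj1_sig s). split; [right; exists s |]; auto.
  - exists q. split; [exact Hq | split; [exact Hqle |]].
    intros p Hp Hpq. assert (Hp0 : sublinear E p /\ forall x, p x <= q0 x).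
    { split; [exact Hp |]. intro x. pose proof (Hpq x); pose proof (Hqle x); lra. }
    exact (Hmax (exist _ p Hp0) Hpq).
Qed.

Theorem real_hahn_banach (q0 : E -> R) : sublinear E q0 ->
  exists f : E -> R,
    (forall x y, f (bs_add x y) = f x + f y) /\
    (forall t x, f (rscal t x) = t * f x) /\
    (forall x, f x <= q0 x).
Proof.
  intro Hq0. destruct (exists_minimal_sublinear q0 Hq0) as [q [Hq [Hle Hmin]]].
  destruct (minimal_sublinear_linear E q Hq Hmin) as [Hadd Hhom].
  exists q. auto.
Qed.

End HahnBanach.

Definition bounded_functional {E : BanachSpace} (phi : E -> Cx) : Prop :=
  (forall x y, phi (bs_add x y) = Cadd (phi x) (phi y)) /\
  (forall c x, phi (bs_scal c x) = Cmul c (phi x)) /\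
  (exists M, 0 <= M /\ forall x, Cabs (phi x) <= M * bs_norm x).

Lemma bounded_functional_sub {E : BanachSpace} (phi : E -> Cx) (x y : E) :
  bounded_functional phi -> phi (bs_sub x y) = Cadd (phi x) (Copp (phi y)).
Proof.
  intros [Hadd [Hscal _]]. unfold bs_sub. rewrite Hadd, bs_oppE. unfold rscal.
  rewrite Hscal. f_equal. apply Cx_eq; simpl; ring.
Qed.

Section Complexification.
Variable E : BanachSpace.

Definition iscal (x : E) : E := bs_scal (mkCx 0 1) x.

Lemma bs_scal_decomp (c : Cx) (x : E) :
  bs_scal c x = bs_add (rscal (Re c) x) (rscal (Im c) (iscal x)).
Proof.
  unfold rscal, iscal. rewrite <- bs_scalA, <- bs_scalDl. f_equal.
  destruct c; apply Cx_eq; simpl; ring.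
Qed.

Lemma iscalK (x : E) : iscal (iscal x) = bs_opp x.
Proof.
  unfold iscal. rewrite <- bs_scalA, bs_oppE. unfold rscal. f_equal.
  apply Cx_eq; simpl; ring.
Qed.

Lemma iscal_rscal (t : R) (x : E) : iscal (rscal t x) = rscal t (iscal x).
Proof. unfold iscal, rscal. rewrite <- !bs_scalA. f_equal. apply Cx_eq; simpl; ring. Qed.

Lemma bs_norm_iscal (x : E) : bs_norm (iscal x) = bs_norm x.
Proof.
  unfold iscal. rewrite bs_normZ. unfold Cabs; simpl.
  replace (0 * 0 + 1 * 1) with 1 by ring. rewrite sqrt_1. ring.
Qed.

Definition complexify (f : E -> R) (x : E) : Cx := mkCx (f x) (- f (iscal x)).

Lemma complexify_bounded (f : E -> R) :
  (forall x y, f (bs_add x y) = f x + f y) ->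
  (forall t x, f (rscal t x) = t * f x) ->
  (forall x, Rabs (f x) <= bs_norm x) ->
  bounded_functional (complexify f).
Proof.
  intros Hadd Hhom Hbound. unfold complexify. split; [|split].
  - intros x y. apply Cx_eq; simpl.
    + apply Hadd.
    + unfold iscal. rewrite bs_scalDr. fold (iscal x) (iscal y). rewrite Hadd. ring.
  - intros c x. rewrite bs_scal_decomp. apply Cx_eq; simpl.
    + rewrite Hadd, !Hhom. ring.
    + unfold iscal at 1. rewrite bs_scalDr. fold (iscal (rscal (Re c) x)).
      fold (iscal (rscal (Im c) (iscal x))).
      rewrite !iscal_rscal, iscalK, Hadd, !Hhom, bs_oppE, Hhom. ring.
  - exists 2. split; [lra|]. intro x. eapply Rle_trans; [apply Cabs_le_Rabs|]; simpl.
    pose proof (Hbound x). pose proof (Hbound (iscal x)).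
    rewrite bs_norm_iscal in *. rewrite Rabs_Ropp. lra.
Qed.

End Complexification.

(* The real functional below [shift bs_norm y] has norm at most 1 and takes the
   value [f y >= ||y||], because [shift bs_norm y (-y) <= - ||y||]. *)
Lemma exists_functional_nonzero (E : BanachSpace) (y : E) :
  y <> bs_zero -> exists phi : E -> Cx, bounded_functional phi /\ phi y <> C0.
Proof.
  intro Hy.
  assert (Hnorm : sublinear E bs_norm).
  { split; [apply bs_normD |]. intros t x Ht.
    rewrite bs_norm_rscal, Rabs_pos_eq by lra. reflexivity. }
  destruct (real_hahn_banach E _ (shift_sublinear E bs_norm y Hnorm))
    as [f [Hadd [Hhom Hle]]].
  assert (Hf : forall x, f x <= bs_norm x).
  { intro x. pose proof (Hle x). pose proof (shift_le E bs_norm y x Hnorm). lra. }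
  exists (complexify E f). split.
  - apply complexify_bounded; [exact Hadd | exact Hhom |]. intro x.
    pose proof (Hf (bs_opp x)) as H. rewrite bs_normN, bs_oppE, Hhom in H.
    pose proof (Hf x). apply Rabs_le. lra.
  - intro H0. assert (Hfy0 : f y = 0)
      by (change (Re (complexify E f y) = 0); rewrite H0; reflexivity).
    pose proof (Hle (bs_opp y)). pose proof (shift_opp_le E bs_norm y Hnorm).
    rewrite bs_oppE, Hhom in *. pose proof (bs_norm_ge0 E y).
    apply Hy, bs_norm_eq0. lra.
Qed.

Lemma functionals_separate (E : BanachSpace) (x y : E) :
  (forall phi : E -> Cx, bounded_functional phi -> phi x = phi y) -> x = y.
Proof.
  intro Hsep. apply bs_sub_eq0, NNPP. intro Hxy.
  destruct (exists_functional_nonzero E _ Hxy) as [phi [Hphi Hnz]].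
  apply Hnz. rewrite bounded_functional_sub, (Hsep phi Hphi) by exact Hphi.
  apply Cx_eq; simpl; ring.
Qed.

Lemma act_sub {A : BanachAlgebra} {X : RightBanachModule A} (x y : X) (b : A) :
  rm_act (bs_sub x y) b = bs_sub (rm_act x b) (rm_act y b).
Proof.
  unfold bs_sub. rewrite rm_actDl, !bs_oppE. unfold rscal. rewrite rm_act_scall.
  reflexivity.
Qed.

Lemma faithful_act_eq {A : BanachAlgebra} {X : RightBanachModule A} :
  (forall x : X, (forall a : A, rm_act x a = bs_zero) -> x = bs_zero) ->
  forall x y : X, (forall a : A, rm_act x a = rm_act y a) -> x = y.
Proof.
  intros Hfaithful x y Hxy. apply bs_sub_eq0, Hfaithful. intro a.
  rewrite act_sub, Hxy. apply bs_addN.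
Qed.

Section Transfer.
Variables (A : BanachAlgebra) (X : RightBanachModule A) (phi : X -> Cx).
Hypothesis phi_bounded : bounded_functional phi.

Definition transfer (J : A -> X) : A -> A -> Cx := fun a b => phi (rm_act (J a) b).

Lemma transfer_bounded_linear (J : A -> X) :
  bounded_linear J -> bounded_linear_dual (transfer J).
Proof.
  destruct phi_bounded as [Hadd [Hscal [M [HM Hbound]]]].
  intros [Jadd [Jscal [MJ HMJ]]]. unfold transfer. split; [|split; [|split]].
  - intro a. split; [|split].
    + intros x y. rewrite rm_actDr; apply Hadd.
    + intros c x. rewrite rm_act_scalr; apply Hscal.
    + exists (M * bs_norm (J a)). intro x. eapply Rle_trans; [apply Hbound|].
      rewrite Rmult_assoc. apply Rmult_le_compat_l; [exact HM | apply rm_normM].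
  - intros a a' b. rewrite Jadd, rm_actDl; apply Hadd.
  - intros c a b. rewrite Jscal, rm_act_scall; apply Hscal.
  - exists (M * MJ). intros a b.
    replace (Cadd (phi (rm_act (J a) b)) (Copp C0)) with (phi (rm_act (J a) b))
      by (apply Cx_eq; simpl; ring).
    eapply Rle_trans; [apply Hbound|].
    pose proof (rm_normM _ _ (J a) b). pose proof (HMJ a).
    pose proof (bs_norm_ge0 _ b). pose proof (bs_norm_ge0 _ (J a)).
    assert (bs_norm (J a) * bs_norm b <= MJ * bs_norm a * bs_norm b)
      by (apply Rmult_le_compat_r; assumption).
    nra.
Qed.

Lemma transfer_JMul (n : nat) (J : A -> X) : JMul_l X n J -> JMul_l_dual A n (transfer J).
Proof.
  intros [HJ Hid]. split; [exact (transfer_bounded_linear J HJ)|].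
  intros a b. unfold transfer. rewrite Hid, rm_actA. reflexivity.
Qed.

Lemma transfer_ref (n : nat) (T : A -> X) :
  approx_local_JMul_l X n T -> ref_JMul_l_dual A n (transfer T).
Proof.
  destruct phi_bounded as [_ [_ [M [HM Hbound]]]].
  intros [HT Happrox]. split; [exact (transfer_bounded_linear T HT)|].
  intros a eps Heps. destruct (Happrox a) as [J [HJ Hconv]].
  destruct (Hconv (eps / (M + 1))) as [N HN].
  { apply Rdiv_lt_0_compat; lra. }
  exists (transfer (J N)). split; [exact (transfer_JMul n (J N) (HJ N))|].
  intro b. unfold transfer. rewrite <- bounded_functional_sub, <- act_sub by exact phi_bounded.
  eapply Rle_trans; [apply Hbound|].
  pose proof (rm_normM _ _ (bs_sub (T a) (J N a)) b).
  specialize (HN N (le_n N)). rewrite bs_norm_subC in HN.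
  pose proof (bs_norm_ge0 _ b). pose proof (bs_norm_ge0 _ (bs_sub (T a) (J N a))).
  assert (Hpos : 0 < eps / (M + 1)) by (apply Rdiv_lt_0_compat; lra).
  assert (Hdiv : eps / (M + 1) * (M + 1) = eps) by (field; lra).
  set (d := bs_norm (bs_sub (T a) (J N a))) in *.
  set (e := eps / (M + 1)) in *.
  assert (d * bs_norm b <= e * bs_norm b) by (apply Rmult_le_compat_r; lra).
  assert (M * (e * bs_norm b) <= eps * bs_norm b).
  { rewrite <- Hdiv. pose proof (Rmult_le_pos e (bs_norm b)). nra. }
  pose proof (Rmult_le_compat_l M _ _ HM H). nra.
Qed.

End Transfer.

Theorem mainTheorem18 :
  forall (A : BanachAlgebra) (n : nat), (2 <= n)%nat ->
  JMul_l_dual_alg_reflexive A n ->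
  forall (X : RightBanachModule A),
  (forall x : X, (forall a : A, rm_act x a = bs_zero) -> x = bs_zero) ->
  forall T : A -> X, approx_local_JMul_l X n T -> JMul_l X n T.
Proof.
  intros A n _ Hrefl X Hfaithful T HT.
  split; [exact (proj1 HT)|]. intro a.
  apply (faithful_act_eq Hfaithful). intro b.
  apply functionals_separate. intros phi Hphi.
  pose proof (Hrefl _ (transfer_ref A X phi Hphi n T HT)) as HJ.
  rewrite rm_actA. exact (proj2 HJ a b).
Qed.
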